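(* $\mathcal D=\Phi^{-1}(\mathbf 1)^+$, where $\Phi^{-1}(\mathbf 1)^+$ is the set of $p\times p$ diagonal matrices $D$ with $D_{ii}>0$ for all $i$ and $\Phi\big((D_{ii})_{i=1}^p\big)=\mathbf 1\in\mathbb{R}^q$.
   Context: Let $\mathcal G=(V,E)$ be a finite directed acyclic graph. Input neurons $N_{\mathrm{in}}$ have no incoming edges, output neurons $N_{\mathrm{out}}$ no outgoing edges, hidden neurons $\mathcal H=V\setminus(N_{\mathrm{in}}\cup N_{\mathrm{out}})$. The parameter vector $\theta\in\mathbb{R}^p$ consists of one weight $\theta_{u\to v}$ per edge $(u,v)\in E$ and one bias $b_v$ per non-input neuron $v$. For $v\in\mathcal H$, $\mathrm{in}_v$ is the set of indices of $b_v$ and of the weights $\theta_{u\to v}$, and $\mathrm{out}_v$ the set of indices of the weights $\theta_{v\to u}$. For $v\in\mathcal H$, $\lambda>0$, $D_{\lambda,v}$ is the diagonal $p\times p$ matrix with entry $\lambda$ on $\mathrm{in}_v$, $1/\lambda$ on $\mathrm{out}_v$, $1$ elsewhere; $\mathcal D$ is the group generated by all $D_{\lambda,v}$. A path is a sequence of neurons $v_0\to\cdots\to v_d$ ($d\ge0$) whose consecutive pairs are edges, with $v_d\in N_{\mathrm{out}}$ (for $d=0$, $v_0\notin N_{\mathrm{in}}$); $\mathrm P$ is the set of paths, $q=|\mathrm P|$. The path-lifting $\Phi:\mathbb{R}^p\to\mathbb{R}^q$ is $\Phi_{\mathrm p}(\theta)=\prod_{\ell=1}^d\theta_{v_{\ell-1}\to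 v_\ell}$ if $v_0\in N_{\mathrm{in}}$ and $\Phi_{\mathrm p}(\theta)=b_{v_0}\prod_{\ell=1}^d\theta_{v_{\ell-1}\to v_\ell}$ otherwise (empty product $=1$). For a diagonal matrix $D$, $\Phi(D)$ means $\Phi$ applied to the vector of its diagonal entries. *)

From HB Require Import structures.
From mathcomp Require Import all_boot all_order all_algebra.
Set Implicit Arguments. Unset Strict Implicit. Unset Printing Implicit Defensive.
Import Order.TTheory GRing.Theory Num.Theory.
Local Open Scope ring_scope.

Section DAGNet.
Variables (V : finType) (E : rel V).

Definition acyclic : Prop := forall u v, E u v -> ~~ connect E v u.

Definition is_input (v : V) : bool := [forall u, ~~ E u v].
Definition is_output (v : V) : bool := [forall u, ~~ E v u].
Definition is_hidden (v : V) : bool := ~~ is_input v && ~~ is_output v.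

(* parameter indices: one weight per edge, one bias per non-input neuron *)
Definition edge_t := {e : V * V | E e.1 e.2}.
Definition bias_t := {v : V | ~~ is_input v}.
Definition Idx : finType := (edge_t + bias_t)%type.
Definition p : nat := #|Idx|.

Definition in_idx (v : V) (k : Idx) : bool :=
  match k with
  | inl e => (val e).2 == v
  | inr b => val b == v
  end.
Definition out_idx (v : V) (k : Idx) : bool :=
  match k with
  | inl e => (val e).1 == v
  | inr _ => false
  end.

Variable R : realFieldType.

Definition resc_entry (lam : R) (v : V) (k : Idx) : R :=
  if in_idx v k then lam else if out_idx v k then lam^-1 else 1.

(* the p x p diagonal matrix D_{lambda,v}; parameter k sits at position enum_rank k *)
Definition Dresc (lam : R) (v : V) : 'M[R]_p :=
  diag_mx (\row_(i < p) resc_entry lam v (enum_val i)).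

Inductive in_D : 'M[R]_p -> Prop :=
  | inD_gen lam v : 0 < lam -> is_hidden v -> in_D (Dresc lam v)
  | inD_one : in_D 1%:M
  | inD_mul A B : in_D A -> in_D B -> in_D (A *m B)
  | inD_inv A : in_D A -> in_D (invmx A).

Definition weight (theta : Idx -> R) (u w : V) : R :=
  match @insub _ (fun e : V * V => E e.1 e.2) edge_t (u, w) with
  | Some e => theta (inl e)
  | None => 0
  end.
Definition bias (theta : Idx -> R) (v : V) : R :=
  match @insub _ (fun x : V => ~~ is_input x) bias_t v with
  | Some b => theta (inr b)
  | None => 0
  end.

Definition is_netpath (s : seq V) : bool :=
  match s with
  | [::] => false
  | v0 :: rest =>
      [&& path E v0 rest, is_output (last v0 rest)
        & (rest != [::]) || ~~ is_input v0]
  end.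
Definition netpath := {s : seq V | is_netpath s}.

Definition Phi_seq (theta : Idx -> R) (s : seq V) : R :=
  match s with
  | [::] => 0
  | v0 :: rest =>
      (if is_input v0 then 1 else bias theta v0) *
      \prod_(uw <- zip (v0 :: rest) rest) weight theta uw.1 uw.2
  end.

(* path-lifting Phi : R^p -> R^q, coordinates indexed by paths *)
Definition Phi (theta : Idx -> R) (P : netpath) : R := Phi_seq theta (val P).

Definition diag_vec (D : 'M[R]_p) : Idx -> R :=
  fun k => D (enum_rank k) (enum_rank k).

End DAGNet.

(* Both sets are the diagonals D_f of the products of the D_{f v, v} over the
   hidden v, for f > 0 with f = 1 off the hidden neurons: D_f carries f b on the
   bias of b and f b / f a on the weight of a -> b.  These D_f form a group, so
   they are exactly the elements of the group generated by the D_{lambda, v};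
   along a path the weights of D_f telescope, so Phi(D_f) = 1.  Conversely, if
   theta > 0 and Phi(theta) = 1, the one-neuron paths force the output biases
   to be 1, and comparing Phi on a path b -> ... and on its extension
   a -> b -> ... shows theta_{a -> b} = f b / f a for f v := b_v on hidden v. *)

From HB Require Import structures.
From mathcomp Require Import all_boot all_order all_algebra.
Set Implicit Arguments. Unset Strict Implicit. Unset Printing Implicit Defensive.
Import Order.TTheory GRing.Theory Num.Theory.
Local Open Scope ring_scope.

Section Rescaling.
Variables (V : finType) (E : rel V) (R : realFieldType).
Hypothesis acyclicE : acyclic E.

Lemma acyclic_edge_neq a b : E a b -> a != b.
Proof.
by move=> Eab; apply: contraNneq (acyclicE Eab) => ->; exact: connect0.
Qed.

Lemma exists_path_to_output v : exists2 s, path E v s & is_output E (last v s).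
Proof.
have [n] := ubnP #|connect E v|; elim: n v => // n IH v lt_v_n.
have [out_v | ] := boolP (is_output E v); first by exists [::].
rewrite negb_forall => /existsP[u]; rewrite negbK => Evu.
have [|s path_u out_s] := IH u; last by exists (u :: s); rewrite /= ?Evu.
rewrite -ltnS; apply: leq_trans lt_v_n.
apply: proper_card; apply/properP; split.
  by apply/subsetP => x; apply: connect_trans (connect1 Evu).
by exists v; [exact: connect0 | exact: acyclicE Evu].
Qed.

Definition diag_of (theta : Idx E -> R) : 'M[R]_(p E) :=
  diag_mx (\row_i theta (enum_val i)).

Lemma eq_diag_of theta1 theta2 :
  theta1 =1 theta2 -> diag_of theta1 = diag_of theta2.
Proof. by move=> eq_theta; congr diag_mx; apply/rowP => i; rewrite !mxE. Qed.

Lemma diag_of1 : diag_of (fun=> 1) = 1%:M.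
Proof.
by rewrite -diag_const_mx; congr diag_mx; apply/rowP => i; rewrite !mxE.
Qed.

Lemma diag_ofM theta1 theta2 :
  diag_of theta1 *m diag_of theta2 = diag_of (fun k => theta1 k * theta2 k).
Proof. by rewrite mulmx_diag; congr diag_mx; apply/rowP => i; rewrite !mxE. Qed.

Lemma invmx_diag_of theta : (forall k, theta k != 0) ->
  invmx (diag_of theta) = diag_of (fun k => (theta k)^-1).
Proof.
move=> theta_neq0.
have diagV : diag_of theta *m diag_of (fun k => (theta k)^-1) = 1%:M.
  by rewrite diag_ofM -diag_of1; apply: eq_diag_of => k; rewrite mulfV.
have [unit_theta _] := mulmx1_unit diagV.
by rewrite -[invmx _]mulmx1 -diagV mulmxA mulVmx ?mul1mx.
Qed.

Lemma diag_vec_diag_of theta : diag_vec (diag_of theta) =1 theta.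
Proof. by move=> k; rewrite /diag_vec !mxE eqxx mulr1n enum_rankK. Qed.

Lemma diag_vecK D : is_diag_mx D -> diag_of (diag_vec D) = D.
Proof.
move/is_diag_mxP=> diagD; apply/matrixP => i j; rewrite !mxE.
have [<- | neq_ij] := eqVneq i j; first by rewrite mulr1n /diag_vec enum_valK.
by rewrite mulr0n diagD.
Qed.

(* The diagonal of the product of the D_{f v, v} over the hidden v, when f = 1
   on the other neurons. *)
Definition resc_diag (f : V -> R) (k : Idx E) : R :=
  match k with
  | inl e => f (val e).2 / f (val e).1
  | inr b => f (val b)
  end.

Definition hidden_scaling (f : V -> R) : Prop :=
  (forall v, 0 < f v) /\ (forall v, ~~ is_hidden E v -> f v = 1).

Lemma resc_diag_gt0 (f : V -> R) k : hidden_scaling f -> 0 < resc_diag f k.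
Proof. by case=> f_gt0 _; case: k => [e | b]; rewrite /= ?divr_gt0. Qed.

Lemma resc_diag1 : resc_diag (fun=> 1) =1 fun=> 1.
Proof. by case=> //= e; rewrite divr1. Qed.

Lemma resc_diagM f g :
  resc_diag (fun v => f v * g v) =1 fun k => resc_diag f k * resc_diag g k.
Proof. by case=> //= e; rewrite invfM mulrACA. Qed.

Lemma resc_diagV f :
  resc_diag (fun v => (f v)^-1) =1 fun k => (resc_diag f k)^-1.
Proof. by case=> //= e; rewrite invfM. Qed.

Lemma resc_entry_edge (lam : R) v (e : edge_t E) :
  resc_entry lam v (inl e) =
  (if (val e).2 == v then lam else 1) * (if (val e).1 == v then lam^-1 else 1).
Proof.
case: e => [[a b] /= Eab]; rewrite /resc_entry /=.
have [<- | _] := eqVneq b v; last by rewrite mul1r.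
by rewrite (negPf (acyclic_edge_neq Eab)) mulr1.
Qed.

Lemma resc_entry_diag (lam : R) v :
  resc_entry lam v =1 resc_diag (fun w => if w == v then lam else 1).
Proof.
case=> [e | b] /=; last by rewrite /resc_entry /=; case: eqP.
rewrite resc_entry_edge.
by case: eqP => _; case: eqP => _; rewrite ?mulr1 ?divr1.
Qed.

Lemma prod_if_eq (P : pred V) (F : V -> R) w :
  \prod_(v | P v) (if w == v then F v else 1) = if P w then F w else 1.
Proof.
rewrite -big_mkcondr; case: ifP => Pw.
  apply: big_pred1 => v /=.
  by rewrite eq_sym; case: eqP => [-> | _]; rewrite ?andbT ?andbF.
by rewrite big_pred0 // => v; case: eqP => [<- | _]; rewrite ?Pw ?andbF.
Qed.

Lemma resc_diag_prod f : hidden_scaling f ->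
  resc_diag f =1 fun k => \prod_(v | is_hidden E v) resc_entry (f v) v k.
Proof.
move=> [f_gt0 f_eq1].
have f_hidden w : (if is_hidden E w then f w else 1) = f w.
  by case: ifPn => // /f_eq1.
case=> [e | b] /=.
  under eq_bigr do rewrite resc_entry_edge.
  rewrite big_split /= prod_if_eq f_hidden.
  rewrite (prod_if_eq _ (fun v => (f v)^-1)).
  by case: ifPn => // /f_eq1 ->; rewrite divr1 mulr1.
rewrite -[LHS]f_hidden -prod_if_eq.
by apply: eq_bigr => v _; rewrite /resc_entry /=; case: eqP.
Qed.

Lemma in_D_prod_Dresc (lam : V -> R) (s : seq V) :
  (forall v, is_hidden E v -> 0 < lam v) ->
  in_D (diag_of (fun k =>
    \prod_(v <- s | is_hidden E v) resc_entry (lam v) v k)).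
Proof.
move=> lam_gt0; elim: s => [|v s IH].
  by under eq_diag_of => k do rewrite big_nil; rewrite diag_of1; exact: inD_one.
have [hidden_v | not_hidden_v] := boolP (is_hidden E v).
  under eq_diag_of => k do rewrite big_cons hidden_v.
  by rewrite -diag_ofM; apply: inD_mul IH; apply: inD_gen; rewrite ?lam_gt0.
by under eq_diag_of => k do rewrite big_cons (negPf not_hidden_v).
Qed.

Lemma in_D_resc_diag f : hidden_scaling f -> in_D (diag_of (resc_diag f)).
Proof.
move=> scaling_f; rewrite (eq_diag_of (resc_diag_prod scaling_f)).
by apply: in_D_prod_Dresc => v _; case: scaling_f.
Qed.

Lemma in_D_hidden_scaling D :
  in_D D -> exists2 f, hidden_scaling f & D = diag_of (resc_diag f).
Proof.
elim=> {D} [lam v lam_gt0 hidden_v | | A B _ [f sf ->] _ [g sg ->] |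
             A _ [f sf ->]].
- exists (fun w => if w == v then lam else 1).
    by split=> w; case: eqP => // ->; rewrite ?hidden_v.
  exact: eq_diag_of (resc_entry_diag lam v).
- exists (fun=> 1); first by split.
  by rewrite -diag_of1; apply: eq_diag_of => k; rewrite resc_diag1.
- exists (fun v => f v * g v).
    case: sf sg => [f_gt0 f_eq1] [g_gt0 g_eq1].
    split=> v; rewrite ?mulr_gt0 //.
    by move=> /[dup] /f_eq1 -> /g_eq1 ->; rewrite mulr1.
  by rewrite diag_ofM; apply: eq_diag_of => k; rewrite resc_diagM.
- exists (fun v => (f v)^-1).
    case: sf => f_gt0 f_eq1.
    by split=> v; rewrite ?invr_gt0 // => /f_eq1 ->; rewrite invr1.
  rewrite invmx_diag_of => [|k]; last by rewrite gt_eqF ?resc_diag_gt0.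
  by apply: eq_diag_of => k; rewrite resc_diagV.
Qed.

Lemma weight_edge (theta : Idx E -> R) a b (Eab : E a b) :
  weight theta a b = theta (inl (exist _ (a, b) Eab)).
Proof. by rewrite /weight insubT. Qed.

Lemma eq_Phi (theta1 theta2 : Idx E -> R) :
  theta1 =1 theta2 -> Phi theta1 =1 Phi theta2.
Proof.
move=> eq_theta P; rewrite /Phi; case: (val P) => [|v0 s] //=; congr (_ * _).
  by rewrite /bias; case: insub => [b|] //; rewrite eq_theta.
apply: eq_bigr => uw _.
by rewrite /weight; case: insub => [e|] //; rewrite eq_theta.
Qed.

Lemma prod_weight_resc_diag f x s : (forall v, f v != 0) -> path E x s ->
  \prod_(uw <- zip (x :: s) s) weight (resc_diag f) uw.1 uw.2 =
  f (last x s) / f x.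
Proof.
move=> f_neq0; elim: s x => [|y s IH] x /=; first by rewrite big_nil divff.
case/andP=> Exy path_y; rewrite big_cons IH // weight_edge /=.
by rewrite mulrC mulrA divfK.
Qed.

Lemma Phi_resc_diag f : hidden_scaling f -> forall P, Phi (resc_diag f) P = 1.
Proof.
case=> f_gt0 f_eq1 [[|v0 s] net_s] //; rewrite /Phi /=.
case/and3P: net_s => path_s out_last _.
rewrite prod_weight_resc_diag // => [|v]; last by rewrite gt_eqF.
have -> : f (last v0 s) = 1 by apply: f_eq1; rewrite /is_hidden out_last andbF.
have -> : (if is_input E v0 then 1 else bias (resc_diag f) v0) = f v0.
  case: ifPn => [in_v0 | nin_v0]; first by rewrite f_eq1 // /is_hidden in_v0.
  by rewrite /bias (insubT (fun x => ~~ is_input E x) nin_v0).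
by rewrite mul1r mulfV ?gt_eqF.
Qed.

Section PathLiftingFiber.
Variable theta : Idx E -> R.
Hypothesis Phi_theta : forall P, Phi theta P = 1.

Lemma Phi1_output_bias w :
  ~~ is_input E w -> is_output E w -> bias theta w = 1.
Proof.
move=> w_nin out_w; have net_w : is_netpath E [:: w] by rewrite /= out_w w_nin.
have := Phi_theta (exist (is_netpath E) _ net_w).
by rewrite /Phi /= (negPf w_nin) big_nil mulr1.
Qed.

Lemma Phi1_edge_weight a b : E a b ->
  (if is_input E a then 1 else bias theta a) * weight theta a b = bias theta b.
Proof.
move=> Eab.
have b_nin : ~~ is_input E b by apply/forallPn; exists a; rewrite negbK.
have [s path_s out_s] := exists_path_to_output b.
set Q := \prod_(uw <- zip (b :: s) s) weight theta uw.1 uw.2.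
have net_b : is_netpath E (b :: s) by rewrite /= path_s out_s b_nin orbT.
have net_ab : is_netpath E (a :: b :: s) by rewrite /= Eab path_s out_s.
have := Phi_theta (exist (is_netpath E) _ net_b).
rewrite /Phi /= (negPf b_nin) -/Q => bQ.
have := Phi_theta (exist (is_netpath E) _ net_ab).
rewrite /Phi /= big_cons /= -/Q mulrA => abQ.
have Q_neq0 : Q != 0.
  by move: (oner_neq0 R); rewrite -bQ mulf_eq0 negb_or => /andP[].
by apply: (mulIf Q_neq0); rewrite abQ bQ.
Qed.

Lemma pos_fiber_hidden_scaling : (forall k, 0 < theta k) ->
  exists2 f, hidden_scaling f & theta =1 resc_diag f.
Proof.
move=> theta_gt0; pose f w := if is_hidden E w then bias theta w else 1.
have bias_f w : ~~ is_input E w -> bias theta w = f w.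
  move=> w_nin; rewrite /f /is_hidden w_nin /=.
  by case: ifPn => // /negPn; exact: Phi1_output_bias.
have f_gt0 w : 0 < f w.
  rewrite /f; case: ifPn => // /andP[w_nin _].
  by rewrite /bias (insubT (fun x => ~~ is_input E x) w_nin).
exists f; first by split=> // w; rewrite /f => /negPf ->.
case=> [[[a b] /= Eab] | [w /= w_nin]] /=; last first.
  by rewrite -bias_f // /bias (insubT (fun x => ~~ is_input E x) w_nin).
have a_nout : ~~ is_output E a by apply/forallPn; exists b; rewrite negbK.
have b_nin : ~~ is_input E b by apply/forallPn; exists a; rewrite negbK.
have head_a : (if is_input E a then 1 else bias theta a) = f a.
  by rewrite /f /is_hidden a_nout andbT; case: ifPn.
rewrite -(bias_f b b_nin) -(Phi1_edge_weight Eab) head_a (weight_edge _ Eab).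
by rewrite [f a * _]mulrC mulfK ?gt_eqF.
Qed.

End PathLiftingFiber.

End Rescaling.

Theorem lemmaD7 (V : finType) (E : rel V) (R : realFieldType)
  (hE : acyclic E) (D : 'M[R]_(p E)) :
  in_D D <->
  [/\ is_diag_mx D, (forall i, 0 < D i i)
    & (forall P : netpath E, Phi (diag_vec D) P = 1)].
Proof.
split=> [/(in_D_hidden_scaling hE) [f scaling_f ->] | [diagD D_gt0 Phi_D]].
  split=> [| i | P]; first exact: diag_mx_is_diag.
    by rewrite !mxE eqxx mulr1n resc_diag_gt0.
  by rewrite (eq_Phi (diag_vec_diag_of _)) Phi_resc_diag.
have [f scaling_f eq_f] := pos_fiber_hidden_scaling hE Phi_D (fun k => D_gt0 _).
by rewrite -(diag_vecK diagD) (eq_diag_of eq_f); exact: in_D_resc_diag.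
Qed.
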